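(* Let $Y$ be a set and $y\in Y$. The centralizer of $y$ in $R\mathfrak L[Y]$ is exactly the Lie ideal $\langle y\rangle$ of $R\mathfrak L[Y]$ generated by $y$.
   Context: $R\mathfrak L[Y]$ is the Lie ring generated by $Y$ subject to $[y_1,[y_2,[\cdots[y_{s-1},y_s]\cdots]]]=0$ for every $s\geq2$ and every $(y_1,\dots,y_s)\in Y^s$ with $y_i=y_j$ for some $i\neq j$. The centralizer of $y$ is $\{u\in R\mathfrak L[Y]:[u,y]=0\}$. *)

(* The relatively free Lie ring RL[Y] is presented as the quotient
   of the syntax of Lie-ring expressions over generators Y by the smallest
   congruence making it a Lie ring (over Z) and killing all right-normed
   commutators with a repeated letter.  We never form the quotient type:
   elements of RL[Y] are expressions, equality in RL[Y] is [rl_eq]. *)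
From Stdlib Require Import List.
Import ListNotations.

Section RL.
Variable Y : Type.

Inductive lexpr : Type :=
| LGen : Y -> lexpr
| LZero : lexpr
| LAdd : lexpr -> lexpr -> lexpr
| LOpp : lexpr -> lexpr
| LBr : lexpr -> lexpr -> lexpr.

(* right-normed commutator [y1,[y2,[...[y_{s-1},y_s]...]]] ; [] ↦ 0 (unused) *)
Fixpoint rn_comm (ys : list Y) : lexpr :=
  match ys with
  | [] => LZero
  | [y] => LGen y
  | y :: ys' => LBr (LGen y) (rn_comm ys')
  end.

Definition has_repeat (ys : list Y) : Prop :=
  exists i j a, i <> j /\ nth_error ys i = Some a /\ nth_error ys j = Some a.

Inductive rl_eq : lexpr -> lexpr -> Prop :=
| rl_refl x : rl_eq x x
| rl_sym x y : rl_eq x y -> rl_eq y x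
| rl_trans x y z : rl_eq x y -> rl_eq y z -> rl_eq x z
| rl_add_cong x x' y y' : rl_eq x x' -> rl_eq y y' -> rl_eq (LAdd x y) (LAdd x' y')
| rl_opp_cong x x' : rl_eq x x' -> rl_eq (LOpp x) (LOpp x')
| rl_br_cong x x' y y' : rl_eq x x' -> rl_eq y y' -> rl_eq (LBr x y) (LBr x' y')
| rl_addA x y z : rl_eq (LAdd x (LAdd y z)) (LAdd (LAdd x y) z)
| rl_addC x y : rl_eq (LAdd x y) (LAdd y x)
| rl_add0 x : rl_eq (LAdd LZero x) x
| rl_addN x : rl_eq (LAdd (LOpp x) x) LZero
| rl_brDl x y z : rl_eq (LBr (LAdd x y) z) (LAdd (LBr x z) (LBr y z))
| rl_brDr x y z : rl_eq (LBr x (LAdd y z)) (LAdd (LBr x y) (LBr x z))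
| rl_brxx x : rl_eq (LBr x x) LZero
| rl_jacobi x y z :
    rl_eq (LAdd (LBr x (LBr y z)) (LAdd (LBr y (LBr z x)) (LBr z (LBr x y)))) LZero
| rl_rel ys : has_repeat ys -> rl_eq (rn_comm ys) LZero.

Definition rl_centralizer (y : Y) (u : lexpr) : Prop :=
  rl_eq (LBr u (LGen y)) LZero.

Inductive rl_ideal_gen (y : Y) : lexpr -> Prop :=
| rli_gen : rl_ideal_gen y (LGen y)
| rli_zero : rl_ideal_gen y LZero
| rli_add a b : rl_ideal_gen y a -> rl_ideal_gen y b -> rl_ideal_gen y (LAdd a b)
| rli_opp a : rl_ideal_gen y a -> rl_ideal_gen y (LOpp a)
| rli_brl a b : rl_ideal_gen y a -> rl_ideal_gen y (LBr b a)
| rli_brr a b : rl_ideal_gen y a -> rl_ideal_gen y (LBr a b)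
| rli_eq a b : rl_eq a b -> rl_ideal_gen y a -> rl_ideal_gen y b.

End RL.
Arguments LGen {Y}.
Arguments LZero {Y}.

From Stdlib Require Import List Permutation ZArith Lia Setoid Morphisms ClassicalEpsilon FunctionalExtensionality PropExtensionality.
Import ListNotations.

(* Interpret Lie expressions in the free associative ring Z<Y>, an element being a
   function from words to coefficients and the bracket the ring commutator.  On words
   without repeated letters this interpretation respects the defining relations of
   RL[Y], because a right-normed commutator is supported on the permutations of its
   letters.  Every element of RL[Y] is a signed sum of right-normed commutators
   [x1,[x2,...,[xk,m]]] with distinct letters, where m is a letter chosen once and for
   all in each set of letters; on words of that shape these commutators evaluate to
   Kronecker deltas, so an element vanishes as soon as its interpretation vanishes on
   repetition-free words.  Hence u lies in the ideal generated by y iff its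
   interpretation vanishes on the repetition-free words avoiding y.  This holds when
   [u,y] = 0, because [u,y] takes at the word w y the value of u at w; conversely, it
   makes [u,y] vanish on all repetition-free words, so that [u,y] = 0. *)

Section RelativelyFreeLieRing.
Variable Y : Type.
Local Notation E := (lexpr Y).
Local Notation "a =~ b" := (rl_eq Y a b) (at level 70).
Local Notation "a +' b" := (LAdd Y a b) (at level 50, left associativity).
Local Notation "-' a" := (LOpp Y a) (at level 35, a at level 35).
Local Notation "[[ a , b ]]" := (LBr Y a b).
Local Notation rn := (rn_comm Y).

#[local] Instance rl_eq_equiv : Equivalence (rl_eq Y).
Proof. split; [intros ?; apply rl_refl | intros ??; apply rl_sym | intros ???; apply rl_trans]. Qed.
#[local] Instance LAdd_proper : Proper (rl_eq Y ==> rl_eq Y ==> rl_eq Y) (LAdd Y).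
Proof. intros ??????. now apply rl_add_cong. Qed.
#[local] Instance LOpp_proper : Proper (rl_eq Y ==> rl_eq Y) (LOpp Y).
Proof. intros ???. now apply rl_opp_cong. Qed.
#[local] Instance LBr_proper : Proper (rl_eq Y ==> rl_eq Y ==> rl_eq Y) (LBr Y).
Proof. intros ??????. now apply rl_br_cong. Qed.

Lemma addr0 (x : E) : x +' LZero =~ x.
Proof. rewrite rl_addC. apply rl_add0. Qed.

Lemma addrN (x : E) : x +' -' x =~ LZero.
Proof. rewrite rl_addC. apply rl_addN. Qed.

Lemma addrCA (a b c : E) : a +' (b +' c) =~ b +' (a +' c).
Proof. rewrite !rl_addA. now rewrite (rl_addC _ a b). Qed.

Lemma oppr_unique (a b : E) : a +' b =~ LZero -> b =~ -' a.
Proof.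
  intro H. rewrite <- (rl_add0 _ b), <- (rl_addN _ a), <- rl_addA, H. apply addr0.
Qed.

Lemma opprK (a : E) : -' -' a =~ a.
Proof. symmetry. apply oppr_unique, rl_addN. Qed.

Lemma opprD (a b : E) : -' (a +' b) =~ -' a +' -' b.
Proof.
  symmetry. apply oppr_unique.
  rewrite (rl_addC _ (-' a)), rl_addA, <- (rl_addA _ a), addrN, addr0. apply addrN.
Qed.

Lemma double_eq0 (z : E) : z +' z =~ z -> z =~ LZero.
Proof.
  intro H. transitivity (z +' (z +' -' z)).
  - rewrite addrN. symmetry. apply addr0.
  - rewrite rl_addA, H. apply addrN.
Qed.

Record additive (phi : E -> E) : Prop := {
  additive_proper : Proper (rl_eq Y ==> rl_eq Y) phi;
  additive_add a b : phi (a +' b) =~ phi a +' phi b }.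

Lemma additive0 {phi} : additive phi -> phi LZero =~ LZero.
Proof.
  intro Hphi. apply double_eq0. rewrite <- (additive_add _ Hphi).
  apply (additive_proper _ Hphi), rl_add0.
Qed.

Lemma additiveN {phi} : additive phi -> forall a, phi (-' a) =~ -' phi a.
Proof.
  intros Hphi a. apply oppr_unique. rewrite <- (additive_add _ Hphi).
  rewrite (additive_proper _ Hphi _ _ (addrN a)). exact (additive0 Hphi).
Qed.

Lemma brl_additive (x : E) : additive (fun a => [[a, x]]).
Proof. split; [intros a a' H; now rewrite H | intros; apply rl_brDl]. Qed.

Lemma brr_additive (x : E) : additive (fun a => [[x, a]]).
Proof. split; [intros a a' H; now rewrite H | intros; apply rl_brDr]. Qed.

Lemma brC (a b : E) : [[a, b]] =~ -' [[b, a]].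
Proof.
  apply oppr_unique.
  pose proof (rl_brxx _ (a +' b)) as H.
  rewrite rl_brDl, !rl_brDr, !rl_brxx, rl_add0, addr0 in H. now rewrite rl_addC.
Qed.

Lemma brl_jacobi (x d v : E) : [[ [[x, d]], v ]] =~ [[x, [[d, v]] ]] +' -' [[d, [[x, v]] ]].
Proof.
  pose proof (rl_jacobi _ x d v) as H.
  rewrite (brC v x), (brC v ([[x, d]])), (additiveN (brr_additive d)), rl_addA in H.
  apply oppr_unique in H. rewrite <- (opprK ([[ [[x, d]], v]])), H. apply opprK.
Qed.

Lemma rn_cons x l : l <> [] -> rn (x :: l) = [[LGen x, rn l]].
Proof. destruct l; [congruence | reflexivity]. Qed.

Fixpoint ad (a : list Y) (v : E) : E :=
  match a with [] => v | x :: a' => [[LGen x, ad a' v]] end.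

Lemma ad_app a b v : ad (a ++ b) v = ad a (ad b v).
Proof. induction a as [|x a IH]; simpl; [reflexivity | now rewrite IH]. Qed.

Lemma ad_rn a b : b <> [] -> ad a (rn b) = rn (a ++ b).
Proof.
  intro Hb. induction a as [|x a IH]; simpl; [reflexivity|].
  rewrite IH. symmetry. apply rn_cons. destruct a; [exact Hb | discriminate].
Qed.

Lemma ad_additive a : additive (ad a).
Proof.
  induction a as [|x a IH]; simpl.
  - split; [intros ?? H; exact H | reflexivity].
  - split; [intros u u' H | intros u v].
    + now rewrite (additive_proper _ IH _ _ H).
    + rewrite (additive_add _ IH). apply rl_brDr.
Qed.

(** * Spans of right-normed commutators *)

Inductive span (f : list Y -> E) (P : list Y -> Prop) : E -> Prop :=
| span_gen v : P v -> span f P (f v)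
| span_zero : span f P LZero
| span_add a b : span f P a -> span f P b -> span f P (a +' b)
| span_opp a : span f P a -> span f P (-' a)
| span_eq a b : a =~ b -> span f P a -> span f P b.

Lemma span_map phi f g P Q e : additive phi ->
  (forall v, P v -> span g Q (phi (f v))) -> span f P e -> span g Q (phi e).
Proof.
  intros Hphi Hgen.
  induction 1 as [v Hv| |a b _ IHa _ IHb|a _ IHa|a b Hab _ IHa].
  - exact (Hgen v Hv).
  - eapply span_eq; [symmetry; exact (additive0 Hphi) | apply span_zero].
  - eapply span_eq; [symmetry; apply (additive_add _ Hphi) | now apply span_add].
  - eapply span_eq; [symmetry; apply (additiveN Hphi) | now apply span_opp].
  - eapply span_eq; [apply (additive_proper _ Hphi), Hab | exact IHa].
Qed.

Lemma span_trans f g P Q e :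
  (forall v, P v -> span g Q (f v)) -> span f P e -> span g Q e.
Proof.
  apply (span_map (fun a => a)). split; [intros ?? H; exact H | reflexivity].
Qed.

Lemma span_br_rn d v : d <> [] ->
  span (fun e => ad e v) (fun e => Permutation e d) [[rn d, v]].
Proof.
  revert v. induction d as [|x d IH]; intros v Hd; [congruence|].
  destruct d as [|z d].
  - exact (span_gen (fun e => ad e v) _ [x] (Permutation_refl _)).
  - rewrite rn_cons by discriminate.
    eapply span_eq; [symmetry; apply brl_jacobi|].
    apply span_add; [|apply span_opp].
    + apply (span_map _ (fun e => ad e v) _ (fun e => Permutation e (z :: d)));
        [apply brr_additive | | apply IH; discriminate].
      intros e He. exact (span_gen (fun e => ad e v) _ (x :: e) (perm_skip x He)).
    + apply (span_trans (fun e => ad e [[LGen x, v]]) _ (fun e => Permutation e (z :: d)));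
        [|apply IH; discriminate].
      intros e He. cbv beta. change [[LGen x, v]] with (ad [x] v). rewrite <- ad_app.
      apply (span_gen (fun e => ad e v)).
      rewrite (Permutation_cons_append (z :: d) x). now apply Permutation_app_tail.
Qed.

Lemma span_rn_last c m : In m c ->
  span rn (fun w => Permutation w c /\ exists w', w = w' ++ [m]) (rn c).
Proof.
  intro Hm. destruct (in_split _ _ Hm) as (c1 & c2 & ->).
  destruct c2 as [|z c2].
  - apply (span_gen rn). split; [reflexivity | now exists c1].
  - rewrite <- ad_rn by discriminate. simpl rn_comm at 1.
    eapply span_eq.
    { apply (additive_proper _ (ad_additive c1)). symmetry. apply brC. }
    eapply span_eq; [symmetry; apply (additiveN (ad_additive c1))|].
    apply span_opp, (span_map _ (fun e => ad e (LGen m)) _ (fun e => Permutation e (z :: c2)));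
      [apply ad_additive | | apply span_br_rn; discriminate].
    intros e He. rewrite <- ad_app. change (LGen m) with (rn [m]).
    rewrite ad_rn, <- app_assoc by discriminate. apply (span_gen rn). split.
    + apply Permutation_app_head.
      rewrite (Permutation_cons_append (z :: c2) m). now apply Permutation_app_tail.
    + exists (c1 ++ e). now rewrite app_assoc.
Qed.

Lemma span_br_rn_rn v1 v2 : span rn (fun _ => True) [[rn v1, rn v2]].
Proof.
  destruct v1 as [|x1 v1].
  { eapply span_eq; [symmetry; exact (additive0 (brl_additive _)) | apply span_zero]. }
  destruct v2 as [|x2 v2].
  { eapply span_eq; [symmetry; exact (additive0 (brr_additive _)) | apply span_zero]. }
  apply (span_trans (fun e => ad e (rn (x2 :: v2))) _ (fun e => Permutation e (x1 :: v1)));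
    [|apply span_br_rn; discriminate].
  intros e _. cbv beta. rewrite ad_rn by discriminate. exact (span_gen rn _ _ I).
Qed.

Lemma span_rn_all e : span rn (fun _ => True) e.
Proof.
  induction e as [z| |a IHa b IHb|a IHa|a IHa b IHb].
  - exact (span_gen rn _ [z] I).
  - apply span_zero.
  - now apply span_add.
  - now apply span_opp.
  - apply (span_map (fun a => [[a, b]]) rn _ (fun _ => True)); [apply brl_additive | | exact IHa].
    intros v1 _.
    apply (span_map (fun b => [[rn v1, b]]) rn _ (fun _ => True)); [apply brr_additive | | exact IHb].
    intros v2 _. apply span_br_rn_rn.
Qed.

Lemma has_repeatP ys : has_repeat Y ys <-> ~ NoDup ys.
Proof.
  split.
  - intros (i & j & a & Hij & Hi & Hj) Hn. apply Hij.
    apply (proj1 (NoDup_nth_error ys) Hn); [apply nth_error_Some; congruence | congruence].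
  - induction ys as [|x ys IH]; intro H; [exfalso; apply H; constructor|].
    destruct (classic (In x ys)) as [Hx|Hx].
    + destruct (In_nth_error _ _ Hx) as (n & Hn). now exists 0, (S n), x.
    + destruct IH as (i & j & a & Hij & Hi & Hj).
      { intro Hn. apply H. now constructor. }
      exists (S i), (S j), a. auto.
Qed.

Variable inh : inhabited Y.

Definition pick (w : list Y) : Y := epsilon inh (fun t => In t w).

Definition canonical (w : list Y) : Prop := NoDup w /\ exists w', w = w' ++ [pick w].

Lemma pick_In w : w <> [] -> In (pick w) w.
Proof.
  intro H. apply (epsilon_spec inh (fun t => In t w)).
  destruct w as [|x w]; [congruence|]. exists x. now left.
Qed.

Lemma pick_perm {w w'} : Permutation w w' -> pick w = pick w'.
Proof.
  intro H. unfold pick. f_equal. apply functional_extensionality. intro t.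
  apply propositional_extensionality. split; apply Permutation_in; [exact H | now symmetry].
Qed.

Lemma span_canonical_rn c : span rn canonical (rn c).
Proof.
  destruct (classic (NoDup c)) as [Hc|Hc].
  - destruct c as [|x c]; [apply span_zero|].
    apply (span_trans rn _ (fun w => Permutation w (x :: c) /\ exists w', w = w' ++ [pick (x :: c)]));
      [|apply span_rn_last, pick_In; discriminate].
    intros w [Hw [w' Hw'] ]. apply (span_gen rn). split.
    + exact (Permutation_NoDup (Permutation_sym Hw) Hc).
    + exists w'. now rewrite (pick_perm Hw).
  - eapply span_eq; [symmetry; apply rl_rel, has_repeatP, Hc | apply span_zero].
Qed.

Lemma span_canonical e : span rn canonical e.
Proof. exact (span_trans _ _ _ _ _ (fun c _ => span_canonical_rn c) (span_rn_all e)). Qed.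

Definition term (f : list Y -> E) (q : bool * list Y) : E :=
  if fst q then f (snd q) else -' f (snd q).

Fixpoint lsum (f : list Y -> E) (L : list (bool * list Y)) : E :=
  match L with [] => LZero | q :: L' => term f q +' lsum f L' end.

Definition flip (L : list (bool * list Y)) : list (bool * list Y) :=
  map (fun q => (negb (fst q), snd q)) L.

Lemma lsum_app f L1 L2 : lsum f (L1 ++ L2) =~ lsum f L1 +' lsum f L2.
Proof.
  induction L1 as [|q L1 IH]; simpl; [symmetry; apply rl_add0|].
  rewrite IH. apply rl_addA.
Qed.

Lemma lsum_flip f L : lsum f (flip L) =~ -' lsum f L.
Proof.
  induction L as [|[ [|] v] L IH]; simpl.
  - apply oppr_unique, rl_add0.
  - rewrite IH, opprD. reflexivity.
  - rewrite IH, opprD. unfold term; simpl. now rewrite opprK.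
Qed.

Lemma span_lsum {f P e} : span f P e ->
  exists L, Forall P (map snd L) /\ e =~ lsum f L.
Proof.
  induction 1 as [v Hv| |a b _ (La & HPa & Ha) _ (Lb & HPb & Hb)|a _ (L & HP & H)|a b Hab _ (L & HP & H)].
  - exists [(true, v)]. split; [now repeat constructor | symmetry; apply addr0].
  - exists []. split; [constructor | reflexivity].
  - exists (La ++ Lb). rewrite map_app, lsum_app, Ha, Hb. split; [now apply Forall_app | reflexivity].
  - exists (flip L). unfold flip. rewrite map_map. split; [exact HP | now rewrite lsum_flip, H].
  - exists L. split; [exact HP | now rewrite <- Hab].
Qed.

Definition eq_dec_Y (a b : Y) : {a = b} + {a <> b} := excluded_middle_informative (a = b).

Local Open Scope Z_scope.

Definition delta (u w : list Y) : Z := if list_eq_dec eq_dec_Y u w then 1 else 0.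

Lemma delta_refl u : delta u u = 1.
Proof. unfold delta. now destruct list_eq_dec. Qed.

Lemma delta_neq u w : u <> w -> delta u w = 0.
Proof. unfold delta. now destruct list_eq_dec. Qed.

Lemma delta_nonzero u w : delta u w <> 0 -> u = w.
Proof. unfold delta. now destruct list_eq_dec. Qed.

Definition sgn (s : bool) : Z := if s then 1 else -1.

Fixpoint coef (L : list (bool * list Y)) (w : list Y) : Z :=
  match L with [] => 0 | q :: L' => sgn (fst q) * delta (snd q) w + coef L' w end.

Lemma coef_app L1 L2 w : coef (L1 ++ L2) w = coef L1 w + coef L2 w.
Proof. induction L1 as [|q L1 IH]; simpl; [|rewrite IH]; ring. Qed.

Lemma coef_sign_unpaired s v R : ~ In (negb s, v) R -> 0 <= sgn s * coef R v.
Proof.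
  induction R as [|[s' v'] R IH]; intro H; simpl; [lia|].
  assert (IHR : 0 <= sgn s * coef R v) by (apply IH; intro; apply H; now right).
  destruct (list_eq_dec eq_dec_Y v' v) as [<-|Hne].
  - rewrite delta_refl. assert (s' = s) as ->.
    { destruct s, s'; simpl in *; auto; exfalso; apply H; now left. }
    destruct s; unfold sgn in *; lia.
  - rewrite delta_neq by exact Hne. lia.
Qed.

Lemma lsum_cancel f L : (forall w, In w (map snd L) -> coef L w = 0) -> lsum f L =~ LZero.
Proof.
  remember (length L) as n eqn:Hn. revert L Hn.
  induction n as [n IH] using lt_wf_ind. intros [|[s v] R] Hn HL; [reflexivity|].
  assert (Hpartner : In (negb s, v) R).
  { apply NNPP. intro Hnot. pose proof (coef_sign_unpaired s v R Hnot).
    specialize (HL v (or_introl eq_refl)). simpl in HL. rewrite delta_refl in HL.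
    destruct s; unfold sgn in *; lia. }
  destruct (in_split _ _ Hpartner) as (R1 & R2 & ->).
  transitivity (lsum f (R1 ++ R2)).
  - assert (Hpair : term f (s, v) +' term f (negb s, v) =~ LZero)
      by (destruct s; [apply addrN | apply rl_addN]).
    simpl. rewrite !lsum_app. simpl. rewrite (addrCA (lsum f R1)), rl_addA, Hpair.
    apply rl_add0.
  - apply (IH (length (R1 ++ R2))); [subst n; simpl; rewrite !length_app; simpl; lia | reflexivity |].
    intros w Hw.
    assert (Hcoef : coef ((s, v) :: R1 ++ (negb s, v) :: R2) w = coef (R1 ++ R2) w).
    { simpl. rewrite !coef_app. simpl. destruct s; unfold sgn; cbn [negb]; ring. }
    apply in_map_iff in Hw as (q & <- & Hq). rewrite <- Hcoef. apply HL, in_map.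
    right. apply in_app_or in Hq as [Hq|Hq]; apply in_or_app; [left | right; right]; exact Hq.
Qed.

Lemma lsum_partition f (p : list Y -> bool) L : lsum f L =~
  lsum f (filter (fun q => p (snd q)) L) +' lsum f (filter (fun q => negb (p (snd q))) L).
Proof.
  induction L as [|[s v] L IH]; simpl; [symmetry; apply rl_add0|].
  destruct (p v); simpl; rewrite IH; [apply rl_addA | apply addrCA].
Qed.

Lemma coef_filter (p : list Y -> bool) L w :
  p w = true -> coef (filter (fun q => p (snd q)) L) w = coef L w.
Proof.
  intro Hw. induction L as [|[s v] L IH]; simpl; [reflexivity|].
  destruct (p v) eqn:Hv; simpl; rewrite IH; [reflexivity|].
  rewrite delta_neq; [ring | congruence].
Qed.

Lemma lsum_filter_support f (p : list Y -> bool) L :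
  (forall w, In w (map snd L) -> p w = false -> coef L w = 0) ->
  lsum f L =~ lsum f (filter (fun q => p (snd q)) L).
Proof.
  intro HL. rewrite (lsum_partition f p L) at 1.
  rewrite (lsum_cancel f (filter (fun q => negb (p (snd q))) L)); [apply addr0|].
  intros w Hw. apply in_map_iff in Hw as (q & <- & Hq). apply filter_In in Hq as [Hq Hp].
  rewrite (coef_filter (fun w => negb (p w))) by exact Hp.
  apply HL; [apply in_map, Hq | now apply Bool.negb_true_iff].
Qed.

(** * Interpretation in Z<Y> *)

(* [conv f g w] is the sum of [f a * g b] over all factorisations [w = a ++ b]:
   the product of the free associative ring Z<Y>, whose elements are seen as
   functions from words to coefficients. *)
Fixpoint conv (f g : list Y -> Z) (w : list Y) : Z :=
  match w with
  | [] => f [] * g []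
  | x :: w' => f [] * g w + conv (fun a => f (x :: a)) g w'
  end.

Lemma conv_ext_factors w : forall f f' g g',
  (forall a b, w = a ++ b -> f a = f' a) -> (forall a b, w = a ++ b -> g b = g' b) ->
  conv f g w = conv f' g' w.
Proof.
  induction w as [|x w IH]; intros f f' g g' Hf Hg; simpl.
  - now rewrite (Hf [] []), (Hg [] []).
  - rewrite (Hf [] (x :: w)), (Hg [] (x :: w)) by reflexivity. f_equal.
    apply IH; intros a b ->; [apply (Hf (x :: a) b) | apply (Hg (x :: a) b)]; reflexivity.
Qed.

Lemma conv_addl w : forall p q h, conv (fun a => p a + q a) h w = conv p h w + conv q h w.
Proof. induction w; intros; simpl; [|rewrite IHw]; ring. Qed.

Lemma conv_subl w : forall p q h, conv (fun a => p a - q a) h w = conv p h w - conv q h w.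
Proof. induction w; intros; simpl; [|rewrite IHw]; ring. Qed.

Lemma conv_scall w : forall c p h, conv (fun a => c * p a) h w = c * conv p h w.
Proof. induction w; intros; simpl; [|rewrite IHw]; ring. Qed.

Lemma conv_addr w : forall f p q, conv f (fun a => p a + q a) w = conv f p w + conv f q w.
Proof. induction w; intros; simpl; [|rewrite IHw]; ring. Qed.

Lemma conv_subr w : forall f p q, conv f (fun a => p a - q a) w = conv f p w - conv f q w.
Proof. induction w; intros; simpl; [|rewrite IHw]; ring. Qed.

Lemma conv_assoc w : forall f g h, conv (conv f g) h w = conv f (conv g h) w.
Proof.
  induction w as [|x w IH]; intros; simpl; [ring|].
  rewrite conv_addl, conv_scall, IH. ring.
Qed.

Lemma conv_support w : forall f g, conv f g w <> 0 ->
  exists a b, w = a ++ b /\ f a <> 0 /\ g b <> 0.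
Proof.
  induction w as [|x w IH]; intros f g H; simpl in H.
  - exists [], []. split; [reflexivity|]. split; intro C; apply H; rewrite C; ring.
  - destruct (Z.eq_dec (f [] * g (x :: w)) 0) as [E0|E0].
    + rewrite E0 in H. destruct (IH _ _ H) as (a & b & -> & Ha & Hb).
      now exists (x :: a), b.
    + exists [], (x :: w). split; [reflexivity|]. split; intro C; apply E0; rewrite C; ring.
Qed.

Lemma conv_vanish_l f g w : (forall a b, w = a ++ b -> f a = 0) -> conv f g w = 0.
Proof.
  intro Hf. destruct (Z.eq_dec (conv f g w) 0) as [E0|E0]; [exact E0|].
  destruct (conv_support _ _ _ E0) as (a & b & Hw & Ha & _). now apply Hf in Hw.
Qed.

Lemma conv_vanish_r f g w : (forall a b, w = a ++ b -> g b = 0) -> conv f g w = 0.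
Proof.
  intro Hg. destruct (Z.eq_dec (conv f g w) 0) as [E0|E0]; [exact E0|].
  destruct (conv_support _ _ _ E0) as (a & b & Hw & _ & Hb). now apply Hg in Hw.
Qed.

Lemma conv_delta_nil g w : conv (delta []) g w = g w.
Proof.
  destruct w as [|x w]; cbn [conv]; rewrite delta_refl; [ring|].
  rewrite conv_vanish_l; [ring|]. intros a b _. now apply delta_neq.
Qed.

Lemma conv_delta1 x g w : conv (delta [x]) g w =
  match w with [] => 0 | x' :: w' => if eq_dec_Y x x' then g w' else 0 end.
Proof.
  destruct w as [|x' w]; cbn [conv]; rewrite (delta_neq [x] []) by discriminate; [ring|].
  destruct (eq_dec_Y x x') as [<-|Hne].
  - rewrite (conv_ext_factors w _ (delta []) g g); [rewrite conv_delta_nil; ring| |reflexivity].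
    intros [|z a] b _; [now rewrite !delta_refl|].
    now rewrite !delta_neq by discriminate.
  - rewrite conv_vanish_l; [ring|]. intros a b _. apply delta_neq. congruence.
Qed.

Lemma conv_delta1_snoc x w : forall g, conv g (delta [x]) (w ++ [x]) = g w.
Proof.
  induction w as [|z w IH]; intros; simpl.
  - rewrite delta_refl, (delta_neq [x] []) by discriminate. ring.
  - rewrite IH, (delta_neq [x] (z :: w ++ [x])); [ring|].
    intro C. inversion C. destruct w; discriminate.
Qed.

Fixpoint sem (e : E) : list Y -> Z :=
  match e with
  | LGen z => delta [z]
  | LZero => fun _ => 0
  | LAdd _ a b => fun w => sem a w + sem b w
  | LOpp _ a => fun w => - sem a w
  | LBr _ a b => fun w => conv (sem a) (sem b) w - conv (sem b) (sem a) w
  end.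

Lemma sem_rn_support ys w : sem (rn ys) w <> 0 -> Permutation w ys.
Proof.
  revert w. induction ys as [|x l IH]; intros w H; [now contradiction H|].
  destruct l as [|z l].
  - apply delta_nonzero in H. now subst.
  - rewrite rn_cons in H by discriminate. cbn [sem] in H.
    assert (H' : conv (delta [x]) (sem (rn (z :: l))) w <> 0 \/
                 conv (sem (rn (z :: l))) (delta [x]) w <> 0) by lia.
    destruct H' as [H'|H']; apply conv_support in H' as (a & b & -> & Ha & Hb).
    + apply delta_nonzero in Ha. subst a. apply perm_skip, IH, Hb.
    + apply delta_nonzero in Hb. subst b.
      rewrite (Permutation_cons_append (z :: l) x). apply Permutation_app_tail, IH, Ha.
Qed.

Lemma sem_sound {a b} : a =~ b -> forall w, NoDup w -> sem a w = sem b w.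
Proof.
  induction 1; intros w Hw; simpl; try ring.
  - symmetry; auto.
  - rewrite IHrl_eq1, IHrl_eq2 by exact Hw. reflexivity.
  - rewrite IHrl_eq1, IHrl_eq2 by exact Hw. reflexivity.
  - rewrite IHrl_eq by exact Hw. reflexivity.
  - assert (Hfactors : forall p q, w = p ++ q -> NoDup p /\ NoDup q).
    { intros p q ->. split; [eapply NoDup_app_remove_r | eapply NoDup_app_remove_l]; eauto. }
    f_equal; apply conv_ext_factors; intros p q Hpq; destruct (Hfactors p q Hpq);
      first [apply IHrl_eq1 | apply IHrl_eq2]; assumption.
  - rewrite conv_addl, conv_addr. ring.
  - rewrite conv_addl, conv_addr. ring.
  - rewrite !conv_subr, !conv_subl, !conv_assoc. ring.
  - destruct (Z.eq_dec (sem (rn ys) w) 0) as [E0|E0]; [exact E0|].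
    apply sem_rn_support in E0. apply has_repeatP in H. contradiction H.
    exact (Permutation_NoDup E0 Hw).
Qed.

Lemma delta_cons x a b : delta (x :: a) (x :: b) = delta a b.
Proof.
  destruct (list_eq_dec eq_dec_Y a b) as [<-|H]; [now rewrite !delta_refl|].
  rewrite !delta_neq; [reflexivity | exact H | congruence].
Qed.

Lemma sem_rn_snoc v m w : NoDup (v ++ [m]) -> (exists w', w = w' ++ [m]) ->
  sem (rn (v ++ [m])) w = delta (v ++ [m]) w.
Proof.
  revert w. induction v as [|x v IH]; intros w Hn [w' ->]; [reflexivity|].
  simpl app. rewrite rn_cons by (destruct v; discriminate). cbn [sem].
  apply NoDup_cons_iff in Hn as [Hx Hn].
  assert (Hxm : x <> m) by (intros ->; apply Hx, in_or_app; right; now left).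
  assert (Hlast : conv (sem (rn (v ++ [m]))) (delta [x]) (w' ++ [m]) = 0).
  { apply conv_vanish_r. intros a b Hab. apply delta_neq. intros <-.
    apply app_inj_tail in Hab as [_ ?]. congruence. }
  rewrite Hlast, conv_delta1.
  destruct w' as [|x' w']; simpl app; cbv iota.
  - destruct (eq_dec_Y x m); [contradiction|]. rewrite delta_neq; [ring|].
    intro C. injection C as -> _. contradiction.
  - destruct (eq_dec_Y x x') as [<-|Hne].
    + rewrite delta_cons, IH; [ring | exact Hn | now exists w'].
    + rewrite delta_neq; [ring | congruence].
Qed.

Lemma sem_rn_canonical v w : canonical v -> canonical w -> sem (rn v) w = delta v w.
Proof.
  intros [Hv [v' Ev] ] [Hw [w' Ew] ].
  destruct (eq_dec_Y (pick w) (pick v)) as [Hp|Hp].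
  - rewrite Ev. apply sem_rn_snoc; [now rewrite <- Ev | exists w'; now rewrite Ew, Hp].
  - rewrite delta_neq by (intros ->; contradiction).
    destruct (Z.eq_dec (sem (rn v) w) 0) as [E0|E0]; [exact E0|].
    now apply sem_rn_support, pick_perm in E0.
Qed.

Lemma sem_lsum_canonical L w : Forall canonical (map snd L) -> canonical w ->
  sem (lsum rn L) w = coef L w.
Proof.
  intros HL Hw. induction L as [|[s v] L IH]; [reflexivity|].
  inversion_clear HL as [|? ? Hv HL']. cbn [lsum coef sem fst snd]. rewrite IH by exact HL'.
  unfold term, sgn; destruct s; cbn [fst snd sem]; rewrite sem_rn_canonical by assumption; ring.
Qed.

Lemma rl_eq0_of_sem e : (forall w, NoDup w -> sem e w = 0) -> e =~ LZero.
Proof.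
  intro H. destruct (span_lsum (span_canonical e)) as (L & HL & He).
  rewrite He. apply lsum_cancel. intros w Hw.
  assert (Hcw : canonical w) by (rewrite Forall_forall in HL; now apply HL).
  rewrite <- (sem_lsum_canonical L w HL Hcw), <- (sem_sound He w (proj1 Hcw)).
  apply H, Hcw.
Qed.

(** * The ideal generated by y *)

Variable y : Y.
Local Notation ideal := (rl_ideal_gen Y y).

Lemma ideal_rn v : In y v -> ideal (rn v).
Proof.
  induction v as [|x v IH]; intro H; [destruct H|].
  destruct v as [|z v].
  - destruct H as [<-|[] ]. apply rli_gen.
  - rewrite rn_cons by discriminate. destruct H as [<-|H].
    + apply rli_brr, rli_gen.
    + apply rli_brl, IH, H.
Qed.

Lemma ideal_lsum L : Forall (In y) (map snd L) -> ideal (lsum rn L).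
Proof.
  induction L as [|[s v] L IH]; intro H; simpl; [apply rli_zero|].
  inversion_clear H as [|? ? Hv HL]. apply rli_add; [|now apply IH].
  destruct s; [|apply rli_opp]; now apply ideal_rn.
Qed.

Definition vanishes_without_y (f : list Y -> Z) : Prop :=
  forall w, NoDup w -> ~ In y w -> f w = 0.

Lemma conv_vanishes_without_y f g : vanishes_without_y f ->
  vanishes_without_y (conv f g) /\ vanishes_without_y (conv g f).
Proof.
  intro Hf. split; intros w Hn Hy; [apply conv_vanish_l | apply conv_vanish_r];
    intros a b ->; apply Hf;
    solve [eapply NoDup_app_remove_r; eauto | eapply NoDup_app_remove_l; eauto
          | intro; apply Hy, in_or_app; auto].
Qed.

Lemma sem_ideal u : ideal u -> vanishes_without_y (sem u).
Proof.
  induction 1 as [| |a b _ IHa _ IHb|a _ IHa|a b _ IHa|a b _ IHa|a b Hab _ IHa];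
    intros w Hn Hy; simpl.
  - apply delta_neq. intros <-. apply Hy. now left.
  - reflexivity.
  - rewrite IHa, IHb by assumption. ring.
  - rewrite IHa by assumption. ring.
  - destruct (conv_vanishes_without_y (sem a) (sem b) IHa) as [Hab Hba].
    rewrite Hab, Hba by assumption. ring.
  - destruct (conv_vanishes_without_y (sem a) (sem b) IHa) as [Hab Hba].
    rewrite Hab, Hba by assumption. ring.
  - rewrite <- (sem_sound Hab) by exact Hn. now apply IHa.
Qed.

Lemma ideal_of_sem u : (forall w, canonical w -> ~ In y w -> sem u w = 0) -> ideal u.
Proof.
  intro H. destruct (span_lsum (span_canonical u)) as (L & HL & Hu).
  set (has_y w := if in_dec eq_dec_Y y w then true else false).
  apply (rli_eq _ _ (lsum rn (filter (fun q => has_y (snd q)) L))).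
  - rewrite Hu. symmetry. apply lsum_filter_support. intros w Hw Hw_y.
    assert (Hcw : canonical w) by (rewrite Forall_forall in HL; now apply HL).
    rewrite <- (sem_lsum_canonical L w HL Hcw), <- (sem_sound Hu w (proj1 Hcw)).
    apply H; [exact Hcw | unfold has_y in Hw_y; now destruct in_dec].
  - apply ideal_lsum, Forall_forall. intros w Hw.
    apply in_map_iff in Hw as (q & <- & Hq). apply filter_In in Hq as [_ Hq].
    unfold has_y in Hq. now destruct in_dec.
Qed.

Lemma sem_br_gen_snoc u w : w <> [] -> NoDup (w ++ [y]) ->
  sem [[u, LGen y]] (w ++ [y]) = sem u w.
Proof.
  intros Hne Hn. cbn [sem]. rewrite conv_delta1_snoc, conv_delta1.
  destruct w as [|x w]; [congruence|]. simpl app. cbv iota.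
  destruct (eq_dec_Y y x) as [<-|_]; [|ring].
  exfalso. apply (NoDup_remove_2 [] _ _ Hn), in_elt.
Qed.

Lemma sem_centralizer u : [[u, LGen y]] =~ LZero ->
  forall w, canonical w -> ~ In y w -> sem u w = 0.
Proof.
  intros Hc w Hw Hy.
  assert (Hne : w <> []) by (destruct Hw as [_ [w' ->] ]; now destruct w').
  assert (Hwy : NoDup (w ++ [y])).
  { apply NoDup_app; [apply Hw | repeat constructor; auto |]. intros a Ha [<-|[] ]. contradiction. }
  rewrite <- sem_br_gen_snoc by assumption. now rewrite (sem_sound Hc).
Qed.

Lemma sem_br_gen u : vanishes_without_y (sem u) -> forall w, NoDup w -> sem [[u, LGen y]] w = 0.
Proof.
  intros H w Hn. cbn [sem].
  assert (Hright : conv (sem u) (delta [y]) w = 0).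
  { destruct (Z.eq_dec (conv (sem u) (delta [y]) w) 0) as [E0|E0]; [exact E0|].
    apply conv_support in E0 as (a & b & -> & Ha & Hb). apply delta_nonzero in Hb as <-.
    contradiction Ha. apply H; [eapply NoDup_app_remove_r; eauto|].
    rewrite <- (app_nil_r a). exact (NoDup_remove_2 a [] y Hn). }
  rewrite Hright, conv_delta1. destruct w as [|x w]; [ring|].
  destruct (eq_dec_Y y x) as [<-|_]; [|ring].
  apply NoDup_cons_iff in Hn as [Hy Hn]. rewrite H by assumption. ring.
Qed.

End RelativelyFreeLieRing.

Theorem lemma2p17 (Y : Type) (y : Y) (u : lexpr Y) :
  rl_centralizer Y y u <-> rl_ideal_gen Y y u.
Proof.
  pose proof (inhabits y) as inh. unfold rl_centralizer. split.
  - intro Hc. apply (ideal_of_sem Y inh), sem_centralizer, Hc.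
  - intro Hu. apply (rl_eq0_of_sem Y inh), sem_br_gen, sem_ideal, Hu.
Qed.
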